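(* Let $N\ge1$, $B>0$, $a_{\max}>0$, and for each $n$ let $a_n\ge0$, $\zeta_n\in(0,1]$, $\beta_n\ge0$, integers $\tau_n\ge1$, $D_n\ge1$, and $0\le q_n<p_n\le1$ with $q_n\le a_n/a_{\max}\le p_n$. Put $\tilde a_n=\frac{a_n-a_{\max}q_n}{p_n-q_n}$. For $\lambda\ge0$ and $n$ with $\zeta_n\beta_n>\lambda$, let $c_n(\lambda)=\frac{\lambda}{(\zeta_n\beta_n-\lambda)(1-\zeta_n)^{\tau_n}+\lambda}$ and $$v_n(\lambda)=\begin{cases} p_n\frac{1-(1-\zeta_n)^{\tau_n}}{\zeta_n}(\zeta_n\beta_n-\lambda), & p_n\le c_n(\lambda),\\[2pt] -(1-p_n)\frac{1-(1-\zeta_n)^{D_n}}{\zeta_n}\lambda+p_n\frac{1-(1-\zeta_n)^{\tau_n+D_n}}{\zeta_n}(\zeta_n\beta_n-\lambda), & p_n>c_n(\lambda).\end{cases}$$ Define $$g_I(\lambda)=\lambda B+\sum_{n:\ \zeta_n\beta_n>\lambda}\Big[\tilde a_n v_n(\lambda)+(a_{\max}-\tilde a_n)q_n\frac{1-(1-\zeta_n)^{\tau_n}}{\zeta_n}(\zeta_n\beta_n-\lambda)\Big],$$ $$g_0(\lambda)=\lambda B+\sum_{n:\ \zeta_n\beta_n>\lambda}a_n\frac{1-(1-\zeta_n)^{\tau_n}}{\zeta_n}(\zeta_n\beta_n-\lambda).$$ Let $\phi_I^*=\min_{\lambda\ge0}g_I(\lambda)$, $\phi_0^*=\min_{\lambda\ge0}g_0(\lambda)$,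 $\lambda_0^*$ a minimizer of $g_0$, and $\lambda_I^*$ a minimizer of $g_I$ over $\lambda\ge0$. Then $$\phi_I^*-\phi_0^*\le\sum_{n:\ \zeta_n\beta_n>\lambda_0^*}\Big\{\tilde a_n v_n(\lambda_0^* )-\frac{(a_np_n-a_{\max}p_nq_n)[1-(1-\zeta_n)^{\tau_n}]}{(p_n-q_n)\zeta_n}(\zeta_n\beta_n-\lambda_0^* )\Big\}$$ and $$\phi_I^*-\phi_0^*\ge\sum_{n:\ \zeta_n\beta_n>\lambda_I^*}\Big\{\tilde a_n v_n(\lambda_I^* )-\frac{(a_np_n-a_{\max}p_nq_n)[1-(1-\zeta_n)^{\tau_n}]}{(p_n-q_n)\zeta_n}(\zeta_n\beta_n-\lambda_I^* )\Big\}.$$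
   Context: Static channels, binary resource levels. $a_n$ is the arrival rate of user $n$, $a_{\max}$ the maximal number of possible arrivals per slot, $p_n$ the true-positive rate and $q_n$ the false-negative rate of prediction, $\tilde a_n$ the rate of predicted arrivals, $\zeta_n$ the success probability, $\beta_n$ the weight, $\tau_n$ the deadline, $D_n$ the prediction window, $B$ the resource budget. $g_I$ and $g_0$ are the Lagrange dual functions with imperfect prediction and with no prediction; $\phi_I^*,\phi_0^*$ the corresponding optimal weighted timely-throughputs. *)

(* classical reals. Users are indexed n = 0, ..., N-1. *)
From Stdlib Require Import Reals Lra.
Open Scope R_scope.

Fixpoint rsum (N : nat) (f : nat -> R) : R :=
  match N with
  | O => 0
  | S k => rsum k f + f k
  end.

Definition rsum_active (N : nat) (zeta beta : nat -> R) (lam : R) (f : nat -> R) : R :=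
  rsum N (fun n => if Rlt_dec lam (zeta n * beta n) then f n else 0).

Definition atil (amax a p q : R) : R := (a - amax * q) / (p - q).

Definition cfun (z b : R) (tau : nat) (lam : R) : R :=
  lam / ((z * b - lam) * (1 - z) ^ tau + lam).

Definition vfun (p z b : R) (tau D : nat) (lam : R) : R :=
  if Rle_dec p (cfun z b tau lam)
  then p * ((1 - (1 - z) ^ tau) / z) * (z * b - lam)
  else - (1 - p) * ((1 - (1 - z) ^ D) / z) * lam
       + p * ((1 - (1 - z) ^ (tau + D)) / z) * (z * b - lam).

Definition gI (N : nat) (B amax : R) (a p q zeta beta : nat -> R)
    (tau D : nat -> nat) (lam : R) : R :=
  lam * B + rsum_active N zeta beta lam (fun n =>
    atil amax (a n) (p n) (q n) * vfun (p n) (zeta n) (beta n) (tau n) (D n) lam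
    + (amax - atil amax (a n) (p n) (q n)) * q n
        * ((1 - (1 - zeta n) ^ tau n) / zeta n) * (zeta n * beta n - lam)).

Definition g0 (N : nat) (B : R) (a zeta beta : nat -> R) (tau : nat -> nat)
    (lam : R) : R :=
  lam * B + rsum_active N zeta beta lam (fun n =>
    a n * ((1 - (1 - zeta n) ^ tau n) / zeta n) * (zeta n * beta n - lam)).

Definition gap_term (amax : R) (a p q zeta beta : nat -> R) (tau D : nat -> nat)
    (lam : R) (n : nat) : R :=
  atil amax (a n) (p n) (q n) * vfun (p n) (zeta n) (beta n) (tau n) (D n) lam
  - ((a n * p n - amax * p n * q n) * (1 - (1 - zeta n) ^ tau n))
      / ((p n - q n) * zeta n) * (zeta n * beta n - lam).

(* At a common multiplier lam the two dual functions share the term lam * B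
   and the same active users, so gI lam - g0 lam is the sum of the gap terms
   at lam.  Comparing two minima then only needs each minimizer to be tested
   against the other one: gI lamI - g0 lam0 is at most gI lam0 - g0 lam0 and
   at least gI lamI - g0 lamI. *)
From Stdlib Require Import Reals Lra Lia.
Open Scope R_scope.

Lemma min_sub_min_bounds (P : R -> Prop) (f g : R -> R) (xf xg : R) :
  P xf -> P xg ->
  (forall x, P x -> f xf <= f x) -> (forall x, P x -> g xg <= g x) ->
  f xf - g xg <= f xg - g xg /\ f xf - g xf <= f xf - g xg.
Proof.
  intros Pxf Pxg f_min g_min.
  specialize (f_min xg Pxg); specialize (g_min xf Pxf); lra.
Qed.

Lemma rsum_sub (N : nat) (f g h : nat -> R) :
  (forall n, (n < N)%nat -> f n - g n = h n) ->
  rsum N f - rsum N g = rsum N h.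
Proof.
  induction N as [|k IH]; intros Hfgh; simpl; [lra|].
  rewrite <- IH by (intros; apply Hfgh; lia).
  rewrite <- (Hfgh k) by lia. lra.
Qed.

Lemma gI_sub_g0 N B amax a p q zeta beta tau D lam :
  (forall n, (n < N)%nat -> 0 < zeta n /\ q n < p n) ->
  gI N B amax a p q zeta beta tau D lam - g0 N B a zeta beta tau lam
  = rsum_active N zeta beta lam (gap_term amax a p q zeta beta tau D lam).
Proof.
  intros Hzq. unfold gI, g0, rsum_active.
  match goal with |- ?x + ?A - (?x + ?C) = ?E =>
    replace (x + A - (x + C)) with (A - C) by ring end.
  apply rsum_sub. intros n Hn. destruct (Hzq n Hn) as [Hz Hpq].
  destruct (Rlt_dec lam (zeta n * beta n)); [|ring].
  unfold gap_term, atil. field. split; lra.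
Qed.

Theorem theorem4
  (N : nat) (B amax : R) (a p q zeta beta : nat -> R) (tau D : nat -> nat)
  (lam0 lamI : R) :
  (1 <= N)%nat -> 0 < B -> 0 < amax ->
  (forall n, (n < N)%nat ->
     0 <= a n /\ 0 < zeta n <= 1 /\ 0 <= beta n /\
     (1 <= tau n)%nat /\ (1 <= D n)%nat /\
     0 <= q n /\ q n < p n /\ p n <= 1 /\
     q n <= a n / amax /\ a n / amax <= p n) ->
  0 <= lam0 ->
  (forall lam, 0 <= lam -> g0 N B a zeta beta tau lam0 <= g0 N B a zeta beta tau lam) ->
  0 <= lamI ->
  (forall lam, 0 <= lam ->
     gI N B amax a p q zeta beta tau D lamI <= gI N B amax a p q zeta beta tau D lam) ->
  gI N B amax a p q zeta beta tau D lamI - g0 N B a zeta beta tau lam0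
    <= rsum_active N zeta beta lam0 (gap_term amax a p q zeta beta tau D lam0)
  /\
  gI N B amax a p q zeta beta tau D lamI - g0 N B a zeta beta tau lam0
    >= rsum_active N zeta beta lamI (gap_term amax a p q zeta beta tau D lamI).
Proof.
  intros _ _ _ Hparams Hlam0 g0_min HlamI gI_min.
  assert (Hzq : forall n, (n < N)%nat -> 0 < zeta n /\ q n < p n).
  { intros n Hn.
    destruct (Hparams n Hn) as (_ & [Hz _] & _ & _ & _ & _ & Hpq & _).
    split; assumption. }
  rewrite <- (gI_sub_g0 N B amax a p q zeta beta tau D lam0 Hzq).
  rewrite <- (gI_sub_g0 N B amax a p q zeta beta tau D lamI Hzq).
  destruct (min_sub_min_bounds (fun lam => 0 <= lam)
              (gI N B amax a p q zeta beta tau D) (g0 N B a zeta beta tau)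
              lamI lam0 HlamI Hlam0 gI_min g0_min) as [upper lower].
  split; lra.
Qed.
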